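(* Let $T_1=(Q_1,\Sigma,\Delta,R_1,q_1^0)$ and $T_2=(Q_2,\Delta,\Omega,R_2,q_2^0)$ be top-down tree transducers, let $A$ be the domain automaton of $T_2$, and let $\hat{T}_1$ be the product construction of $T_1$ and $A$. Then $\text{dom}(\hat{T}_1)=\text{dom}(T_1\circ T_2)$, and for every $s\in T_\Sigma$, $\hat{T}_1(s)=T_1(s)\cap\text{dom}(T_2)$.
   Context: A top-down tree transducer $T=(Q,\Sigma,\Delta,R,q_0)$ has finite state set $Q$, ranked input/output alphabets $\Sigma,\Delta$, initial state $q_0$, and finite rule set $R$ of rules $q(a(x_1,\dots,x_k))\to t$ with $a\in\Sigma_k$ ($\Sigma_k$ = symbols of rank $k$) and $t$ a tree over $\Delta$ whose leaves may additionally be of the form $q'(x_i)$, $q'\in Q$, $i\in[k]$; rules are used as rewrite rules in the usual way. $T(s)$ is the set of trees over $\Delta$ derivable from $q_0(s)$, $\text{dom}(T)=\{s\mid T(s)\neq\emptyset\}$; $\text{dom}(T_1\circ T_2)$ is the set of $s$ such that $T_2(t)\neq\emptyset$ for some $t\in T_1(s)$. For $q\in Q$, $a\in\Sigma_k$, $\text{rhs}_T(q,a)$ is the set of right-hand sides of rules with left-hand side $q(a(x_1,\dots,x_k))$; for a set $\Gamma$ of right-hand sides, $\Gamma[x_i]$ is the set of $q'\in Q$ with $q'(x_i)$ occurring in some tree of $\Gamma$. Domain automaton of $T$: the top-down tree automaton (transducer over $\Sigma$ with rules of the form $p(a(x_1,\dots,x_k))\to a(p_1(x_1),\dots,p_k(x_k))$)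 with states all subsets of $Q$, initial state $\{q_0\}$, rules $S(a(x_1,\dots,x_k))\to a(S_1(x_1),\dots,S_k(x_k))$ for every $a\in\Sigma_k$, nonempty $S=\{q_1,\dots,q_n\}\subseteq Q$ and nonempty $\Gamma_j\subseteq\text{rhs}_T(q_j,a)$ ($j\in[n]$), where $S_i=\bigcup_j\Gamma_j[x_i]$, and rules $\emptyset(a(x_1,\dots,x_k))\to a(\emptyset(x_1),\dots,\emptyset(x_k))$ for all $a$. Product construction of transducers $T=(Q,\Sigma,\Delta,R,q_0)$ and $T'=(Q',\Delta,\Omega,R',q'_0)$: the transducer with states $Q\times Q'$, input $\Sigma$, output $\Omega$, initial state $(q_0,q'_0)$, and, for every rule $q(a(x_1,\dots,x_k))\to\xi$ of $T$, every $p\in Q'$ and every tree $\zeta$ derivable from $p(\xi)$ using rules of $T'$ in which the leaves of $\xi$ of the form $q''(x_i)$ are treated as unrewritable symbols and a state $p'$ applied to such a leaf stays as $p'(q''(x_i))$, the rule $(q,p)(a(x_1,\dots,x_k))\to\zeta'$, where $\zeta'$ is obtained from $\zeta$ by replacing each $p'(q''(x_i))$ by $(q'',p')(x_i)$. *)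

From mathcomp Require Import all_boot.
From Stdlib Require List.

Set Implicit Arguments.
Unset Strict Implicit.
Unset Printing Implicit Defensive.

(* Trees over a ranked alphabet F (rank given separately by ar : F -> nat). *)
Inductive tree (F : Type) : Type := Node : F -> seq (tree F) -> tree F.
Arguments Node {F}.

Fixpoint wft (F : Type) (ar : F -> nat) (t : tree F) : bool :=
  let: Node f ts := t in (size ts == ar f) && all (wft ar) ts.

(* Right-hand sides: trees over D whose leaves may be q(x_i).
   RCall q i stands for q(x_{i+1}) (variables are 0-indexed). *)
Inductive rhs (Q D : Type) : Type :=
| RCall : Q -> nat -> rhs Q D
| RNode : D -> seq (rhs Q D) -> rhs Q D.
Arguments RCall {Q D}.
Arguments RNode {Q D}.

Fixpoint wfr (Q D : Type) (arD : D -> nat) (k : nat) (r : rhs Q D) : bool :=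
  match r with
  | RCall _ i => i < k
  | RNode d rs => (size rs == arD d) && all (wfr arD k) rs
  end.

Fixpoint calls (Q D : Type) (r : rhs Q D) : seq (Q * nat) :=
  match r with
  | RCall q i => [:: (q, i)]
  | RNode _ rs => flatten (map (@calls Q D) rs)
  end.

(* Top-down tree transducer: the rule set is the relation
   rule q a r  <->  q(a(x_1..x_k)) -> r is a rule. *)
Record tdtt (Q S D : Type) := TDTT {
  rule : Q -> S -> rhs Q D -> Prop;
  init : Q }.
Arguments TDTT {Q S D}.

Definition tt_finite (Q S D : Type) (T : tdtt Q S D) : Prop :=
  exists l : list (Q * S * rhs Q D),
    forall q a r, rule T q a r <-> List.In (q, a, r) l.

Definition tt_wf (Q S D : Type) (arS : S -> nat) (arD : D -> nat)
  (T : tdtt Q S D) : Prop :=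
  forall q a r, rule T q a r -> wfr arD (arS a) r.

(* Semantics of a right-hand side
   r applied to subtrees xs (for x_1..x_k): rhs_out T xs r t holds when t is
   obtained from r by replacing every occurrence of a leaf q(x_i)
   independently by some tree derivable from q(x_i). *)
Inductive out_st (Q S D : Type) (T : tdtt Q S D) : Q -> tree S -> tree D -> Prop :=
| out_rule q a ss r t :
    rule T q a r -> rhs_out T ss r t -> out_st T q (Node a ss) t
with rhs_out (Q S D : Type) (T : tdtt Q S D) :
    seq (tree S) -> rhs Q D -> tree D -> Prop :=
| ro_call xs q i x t :
    List.nth_error xs i = Some x -> out_st T q x t -> rhs_out T xs (RCall q i) t
| ro_node xs d rs ts :
    rhs_out_list T xs rs ts -> rhs_out T xs (RNode d rs) (Node d ts)
with rhs_out_list (Q S D : Type) (T : tdtt Q S D) :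
    seq (tree S) -> seq (rhs Q D) -> seq (tree D) -> Prop :=
| rol_nil xs : rhs_out_list T xs [::] [::]
| rol_cons xs r rs t ts :
    rhs_out T xs r t -> rhs_out_list T xs rs ts ->
    rhs_out_list T xs (r :: rs) (t :: ts).

Definition out (Q S D : Type) (T : tdtt Q S D) (s : tree S) (t : tree D) :=
  out_st T (init T) s t.

Definition in_dom (Q S D : Type) (T : tdtt Q S D) (s : tree S) :=
  exists t, out T s t.

Definition in_dom_comp (Q1 Q2 S D O : Type) (T1 : tdtt Q1 S D)
  (T2 : tdtt Q2 D O) (s : tree S) :=
  exists t u, out T1 s t /\ out T2 t u.

Section DomAut.
Variables (Q : finType) (D O : Type) (arD : D -> nat) (T : tdtt Q D O).

Definition dom_succ (S : {set Q}) (Gam : Q -> seq (rhs Q O)) (i : nat)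
  : {set Q} :=
  [set q' | [exists j in S, has (fun g => (q', i) \in calls g) (Gam j)]].

Definition dom_aut_rule (S : {set Q}) (a : D) (r : rhs {set Q} D) : Prop :=
  (S = set0 /\ r = RNode a [seq RCall set0 i | i <- iota 0 (arD a)])
  \/
  (S != set0 /\
   exists Gam : Q -> seq (rhs Q O),
     (forall j, j \in S ->
        Gam j <> [::] /\ forall g, List.In g (Gam j) -> rule T j a g) /\
     r = RNode a [seq RCall (dom_succ S Gam i) i | i <- iota 0 (arD a)]).

Definition dom_aut : tdtt {set Q} D D := TDTT dom_aut_rule [set init T].
End DomAut.

Section Product.
Variables (Q Q' S D O : Type) (T : tdtt Q S D) (T' : tdtt Q' D O).

(* pderiv p xi z : z is (the renamed form zeta' of) a tree zeta over O
   derivable from p(xi) using T', where leaves q''(x_i) of xi are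
   unrewritable and p'(q''(x_i)) is renamed into (q'',p')(x_i). *)
Inductive pderiv : Q' -> rhs Q D -> rhs (Q * Q') O -> Prop :=
| pd_call p q i : pderiv p (RCall q i) (RCall (q, p) i)
| pd_node p d xs r z :
    rule T' p d r -> prhs xs r z -> pderiv p (RNode d xs) z
with prhs : seq (rhs Q D) -> rhs Q' O -> rhs (Q * Q') O -> Prop :=
| pr_call xs p' j x z :
    List.nth_error xs j = Some x -> pderiv p' x z -> prhs xs (RCall p' j) z
| pr_node xs o rs zs : prhs_list xs rs zs -> prhs xs (RNode o rs) (RNode o zs)
with prhs_list : seq (rhs Q D) -> seq (rhs Q' O) -> seq (rhs (Q * Q') O) -> Prop :=
| prl_nil xs : prhs_list xs [::] [::]
| prl_cons xs r rs z zs :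
    prhs xs r z -> prhs_list xs rs zs -> prhs_list xs (r :: rs) (z :: zs).

Definition prod_rule (qp : Q * Q') (a : S) (z : rhs (Q * Q') O) : Prop :=
  exists xi, rule T qp.1 a xi /\ pderiv qp.2 xi z.

Definition product : tdtt (Q * Q') S O := TDTT prod_rule (init T, init T').
End Product.

(* A state S of the domain automaton A of T2 accepts t iff every q in S has an
   output on t: choosing one rule of T2 for each q in S, A passes to the i-th
   child the set of states called on x_i by the chosen rules, and conversely
   any accepting run of A yields such rules.  A derivation of the product
   from (q, P) on s runs T1 from q and, on each right-hand side produced, A
   from P; since A only copies its input, it yields exactly the outputs t of
   T1 from q on s that A accepts from P (induction on s and, inside a rule,
   on its right-hand side).  Taking q = q1^0 and P = {q2^0} gives the
   theorem. *)

From mathcomp Require Import all_boot.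
From Stdlib Require Import ClassicalEpsilon.

Set Implicit Arguments.
Unset Strict Implicit.
Unset Printing Implicit Defensive.

Fixpoint tree_nested_ind (F : Type) (P : tree F -> Prop)
  (Hn : forall a ts, (forall t, List.In t ts -> P t) -> P (Node a ts))
  (t : tree F) : P t :=
  match t with
  | Node a ts => Hn a ts
      ((fix go (l : seq (tree F)) : forall t, List.In t l -> P t :=
         match l with
         | [::] => fun t H => False_ind _ H
         | t0 :: l' => fun t H =>
             match H with
             | or_introl e => eq_ind t0 P (tree_nested_ind Hn t0) t e
             | or_intror H' => go l' t H'
             end
         end) ts)
  end.

Fixpoint rhs_nested_ind (Q D : Type) (P : rhs Q D -> Prop)
  (Hc : forall q i, P (RCall q i))
  (Hn : forall d rs, (forall r, List.In r rs -> P r) -> P (RNode d rs))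
  (r : rhs Q D) : P r :=
  match r with
  | RCall q i => Hc q i
  | RNode d rs => Hn d rs
      ((fix go (l : seq (rhs Q D)) : forall r, List.In r l -> P r :=
         match l with
         | [::] => fun r H => False_ind _ H
         | r0 :: l' => fun r H =>
             match H with
             | or_introl e => eq_ind r0 P (rhs_nested_ind Hc Hn r0) r e
             | or_intror H' => go l' r H'
             end
         end) rs)
  end.

Lemma all_In (X : Type) (p : pred X) s x : all p s -> List.In x s -> p x.
Proof. by elim: s => [|y s IH] //= /andP [py ps] [<- | /IH]; auto. Qed.

Lemma nth_error_lt_size (X : Type) (s : seq X) i x :
  List.nth_error s i = Some x -> i < size s.
Proof. by elim: s i => [|y s IH] [|i] //= /IH. Qed.

Lemma lt_size_nth_error (X : Type) (s : seq X) i :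
  i < size s -> exists x, List.nth_error s i = Some x.
Proof. by elim: s i => [|y s IH] [|i] //=; eauto. Qed.

Lemma nth_error_map_iota (X : Type) (g : nat -> X) m n i :
  List.nth_error [seq g j | j <- iota m n] i = if i < n then Some (g (m + i)) else None.
Proof.
elim: n m i => [|n IH] m [|i] //=; first by rewrite addn0.
by rewrite IH ltnS addSnnS.
Qed.

Lemma mem_flatten_map (X : Type) (W : eqType) (f : X -> seq W) s w :
  w \in flatten (map f s) <-> exists2 x, List.In x s & w \in f x.
Proof.
elim: s => [|x s IH] /=; first by split=> // -[].
rewrite mem_cat; split.
- by case/orP=> [wx | /IH [y sy wy]]; [exists x; first left | exists y; first right].
- case=> y [<- | sy] wy; first by rewrite wy.
  by apply/orP; right; apply/IH; exists y.
Qed.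

Lemma Forall2_nth_error (X Y : Type) (R : X -> Y -> Prop) xs ys :
  List.Forall2 R xs ys <->
  size xs = size ys /\
  forall i x y, List.nth_error xs i = Some x -> List.nth_error ys i = Some y -> R x y.
Proof.
split.
- elim=> [|x y xs' ys' Rxy _ [Hsz IH]]; first by split=> // -[].
  by split=> [/= | [|i] x' y' /=]; [rewrite Hsz | move=> [<-] [<-] | exact: IH].
- elim: xs ys => [|x xs IH] [|y ys] [//= Hsz H]; constructor; first exact: (H 0).
  by apply: IH; split=> [| i]; [case: Hsz | exact: (H i.+1)].
Qed.

Lemma Forall2_map_iota (X Y : Type) (R : X -> Y -> Prop) (g : nat -> X) n ys :
  List.Forall2 R [seq g i | i <- iota 0 n] ys <->
  size ys = n /\ forall i y, List.nth_error ys i = Some y -> R (g i) y.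
Proof.
rewrite Forall2_nth_error size_map size_iota; split=> -[-> H]; split=> // i.
- move=> y Hy; apply: (H i _ _ _ Hy).
  by rewrite nth_error_map_iota (nth_error_lt_size Hy).
- by move=> x y; rewrite nth_error_map_iota; case: ifP => // _ [<-]; apply: H.
Qed.

Lemma ex_Forall2 (X Y : Type) (R : X -> Y -> Prop) xs :
  (exists ys, List.Forall2 R xs ys) <-> forall x, List.In x xs -> exists y, R x y.
Proof.
elim: xs => [|x xs IH]; first by split=> // _; exists [::].
split.
- move=> [ys Hys] x' Hx'; inversion_clear Hys as [|? y ? ys' Rxy Hys'].
  case: Hx' => [<- | Hx']; first by exists y.
  by apply: IH.1 x' Hx'; exists ys'.
- move=> H; have [y Rxy] := H x (or_introl erefl).
  have [ys Hys] := IH.2 (fun x' Hx' => H x' (or_intror Hx')).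
  by exists (y :: ys); constructor.
Qed.

Lemma seq_choiceP (Y : Type) (P : nat -> Y -> Prop) n :
  (exists ys, size ys = n /\ forall i y, List.nth_error ys i = Some y -> P i y) <->
  forall i, i < n -> exists y, P i y.
Proof.
split.
- by move=> [ys [<- H]] i /lt_size_nth_error [y Hy]; exists y; apply: H Hy.
- elim: n P => [|n IH] P H; first by exists [::]; split=> // -[|i].
  have [y Py] := H 0 erefl.
  have [ys [Hsz Hys]] := IH (fun i => P i.+1) (fun i => H i.+1).
  exists (y :: ys); split=> [| [|i] y' /=]; first by rewrite /= Hsz.
    by move=> [<-].
  exact: Hys.
Qed.

Lemma Forall2_comp_pointwise (X Y Z : Type) (PD : nat -> X -> Z -> Prop)
    (RO : Z -> Y -> Prop) (R1 : X -> Y -> Prop) (AC : nat -> Y -> Prop) xs ys :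
  (forall i x y, List.nth_error xs i = Some x ->
     (exists z, PD i x z /\ RO z y) <-> R1 x y /\ AC i y) ->
  (exists zs, (size zs = size xs /\
       forall i z, List.nth_error zs i = Some z ->
         exists x, List.nth_error xs i = Some x /\ PD i x z) /\
     List.Forall2 RO zs ys)
  <-> List.Forall2 R1 xs ys /\
      forall i, i < size xs -> exists y, List.nth_error ys i = Some y /\ AC i y.
Proof.
move=> Hfac; split.
- move=> [zs [[Hzs HPD] /Forall2_nth_error [Hzy HRO]]].
  have Hsplit i x y : List.nth_error xs i = Some x -> List.nth_error ys i = Some y ->
      R1 x y /\ AC i y.
    move=> Hx Hy; apply/(Hfac i x y Hx).
    have [z Hz] : exists z, List.nth_error zs i = Some z.
      by apply: lt_size_nth_error; rewrite Hzs (nth_error_lt_size Hx).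
    have [x' [Hx' Hpd]] := HPD i z Hz.
    by move: Hx'; rewrite Hx => -[->]; exists z; split=> //; apply: HRO Hz Hy.
  split.
  + apply/Forall2_nth_error; split=> [|i x y Hx Hy]; first by rewrite -Hzs.
    exact: (Hsplit i x y Hx Hy).1.
  + move=> i lt_i; have [x Hx] := lt_size_nth_error lt_i.
    have [y Hy] : exists y, List.nth_error ys i = Some y.
      by apply: lt_size_nth_error; rewrite -Hzy Hzs.
    by exists y; split=> //; apply: (Hsplit i x y Hx Hy).2.
- move=> [/Forall2_nth_error [Hxy HR1] HAC].
  have [zs [Hzs Hz]] : exists zs, size zs = size xs /\
      forall i z, List.nth_error zs i = Some z -> exists x y,
        [/\ List.nth_error xs i = Some x, List.nth_error ys i = Some y,
            PD i x z & RO z y].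
    apply/seq_choiceP => i lt_i.
    have [x Hx] := lt_size_nth_error lt_i; have [y [Hy Hacc]] := HAC i lt_i.
    have [z [Hpd Hro]] := (Hfac i x y Hx).2 (conj (HR1 i x y Hx Hy) Hacc).
    by exists z, x, y.
  exists zs; split.
  + by split=> // i z /Hz [x [y [Hx _ Hpd _]]]; exists x.
  + apply/Forall2_nth_error; split=> [|i z y /Hz [x [y' [_ Hy' _ Hro]]] Hy].
      by rewrite Hzs.
    by move: Hy'; rewrite Hy => -[->].
Qed.

Section Semantics.
Variables (Q S D : Type) (T : tdtt Q S D).

Definition accepts (q : Q) (s : tree S) : Prop := exists t, out_st T q s t.

Lemma out_st_nodeE q a ss t :
  out_st T q (Node a ss) t <-> exists r, rule T q a r /\ rhs_out T ss r t.
Proof. by split=> [H | [r [Hr Ht]]]; [inversion H; eauto | econstructor; eauto]. Qed.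

Lemma accepts_nodeE q a ss :
  accepts q (Node a ss) <-> exists r, rule T q a r /\ exists t, rhs_out T ss r t.
Proof.
split=> [[t /out_st_nodeE [r [Hr Ht]]] | [r [Hr [t Ht]]]]; first by eauto.
by exists t; apply/out_st_nodeE; eauto.
Qed.

Lemma rhs_out_callE xs q i t :
  rhs_out T xs (RCall q i) t <->
  exists x, List.nth_error xs i = Some x /\ out_st T q x t.
Proof. by split=> [H | [x [Hx Ht]]]; [inversion H; eauto | econstructor; eauto]. Qed.

Lemma rhs_out_listE xs rs ts :
  rhs_out_list T xs rs ts <-> List.Forall2 (rhs_out T xs) rs ts.
Proof. by split; elim; constructor. Qed.

Lemma rhs_out_nodeE xs d rs t :
  rhs_out T xs (RNode d rs) t <->
  exists ts, t = Node d ts /\ List.Forall2 (rhs_out T xs) rs ts.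
Proof.
split=> [H | [ts [-> /rhs_out_listE Hts]]]; last by constructor.
by inversion H; exists ts; split=> //; apply/rhs_out_listE.
Qed.

End Semantics.

Lemma ex_rhs_outP (Q : eqType) (S D : Type) (T : tdtt Q S D) xs (g : rhs Q D) :
  (exists t, rhs_out T xs g t) <->
  forall q i, (q, i) \in calls g ->
    exists x, List.nth_error xs i = Some x /\ accepts T q x.
Proof.
elim/rhs_nested_ind: g => [q i | d rs IH] /=.
- split=> [[t /rhs_out_callE [x [Hx Ht]]] q' i' | H].
    by rewrite mem_seq1 => /eqP [-> ->]; exists x; split=> //; exists t.
  have [x [Hx [t Ht]]] := H q i (mem_head _ _).
  by exists t; apply/rhs_out_callE; eauto.
- have ex_nodeE : (exists t, rhs_out T xs (RNode d rs) t) <->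
                  forall r, List.In r rs -> exists t, rhs_out T xs r t.
    rewrite -ex_Forall2; split=> [[t /rhs_out_nodeE [ts [_ Hts]]] | [ts Hts]].
      by exists ts.
    by exists (Node d ts); apply/rhs_out_nodeE; exists ts.
  rewrite ex_nodeE; split=> [H q i /mem_flatten_map [r Hr Hcall] | H r Hr].
    exact: (IH r Hr).1 (H r Hr) q i Hcall.
  by apply/(IH r Hr) => q i Hcall; apply: H; apply/mem_flatten_map; exists r.
Qed.

Lemma wfr_calls_lt (Q : eqType) (D : Type) (ar : D -> nat) k (g : rhs Q D) q i :
  wfr ar k g -> (q, i) \in calls g -> i < k.
Proof.
elim/rhs_nested_ind: g => [q' i' | d rs IH] /=.
  by move=> lt_ik; rewrite mem_seq1 => /eqP [_ ->].
by move=> /andP [_ Hrs] /mem_flatten_map [r Hr]; apply: IH Hr (all_In Hrs Hr).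
Qed.

Section WellRanked.
Variables (Q S D : Type) (arS : S -> nat) (arD : D -> nat) (T : tdtt Q S D).
Hypothesis wfT : tt_wf arS arD T.

Lemma wft_rhs_out xs k r t :
  (forall x q u, List.In x xs -> out_st T q x u -> wft arD u) ->
  wfr arD k r -> rhs_out T xs r t -> wft arD t.
Proof.
move=> wf_xs; elim/rhs_nested_ind: r t => [q i | d rs IH] t /=.
  by move=> _ /rhs_out_callE [x [Hx Ht]]; apply: wf_xs Ht; apply: List.nth_error_In Hx.
move=> /andP [/eqP Hsz Hrs] /rhs_out_nodeE [ts [-> Hts]] /=.
have [<- _] := (Forall2_nth_error _ _ _).1 Hts.
rewrite Hsz eqxx /=.
elim: Hts IH Hrs => //= r u rs' ts' Hru _ IHts IH /andP [Hr Hrs].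
rewrite (IH r (or_introl erefl) u Hr Hru) IHts // => r' Hr'.
by apply: IH; right.
Qed.

Lemma wft_out_st s q t : out_st T q s t -> wft arD t.
Proof.
elim/tree_nested_ind: s q t => a ss IH q t /out_st_nodeE [r [Hr Ht]].
by apply: (wft_rhs_out _ (wfT Hr) Ht) => x q' u /IH; apply.
Qed.

End WellRanked.

Section ProductDerivations.
Variables (Q Q' D O : Type) (T' : tdtt Q' D O).

Lemma pderiv_callE p (q : Q) i z : pderiv T' p (RCall q i) z <-> z = RCall (q, p) i.
Proof. by split=> [H | ->]; [inversion H | constructor]. Qed.

Lemma pderiv_nodeE p d (xs : seq (rhs Q D)) z :
  pderiv T' p (RNode d xs) z <-> exists r, rule T' p d r /\ prhs T' xs r z.
Proof. by split=> [H | [r [Hr Hz]]]; [inversion H; eauto | econstructor; eauto]. Qed.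

Lemma prhs_callE (xs : seq (rhs Q D)) p j z :
  prhs T' xs (RCall p j) z <->
  exists x, List.nth_error xs j = Some x /\ pderiv T' p x z.
Proof. by split=> [H | [x [Hx Hz]]]; [inversion H; eauto | econstructor; eauto]. Qed.

Lemma prhs_listE (xs : seq (rhs Q D)) rs zs :
  prhs_list T' xs rs zs <-> List.Forall2 (prhs T' xs) rs zs.
Proof. by split; elim; constructor. Qed.

Lemma prhs_nodeE (xs : seq (rhs Q D)) o rs z :
  prhs T' xs (RNode o rs) z <->
  exists zs, z = RNode o zs /\ List.Forall2 (prhs T' xs) rs zs.
Proof.
split=> [H | [zs [-> /prhs_listE Hzs]]]; last by constructor.
by inversion H; exists zs; split=> //; apply/prhs_listE.
Qed.

End ProductDerivations.

Definition aut_rhs (P D : Type) (d : D) (f : nat -> P) (n : nat) : rhs P D :=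
  RNode d [seq RCall (f i) i | i <- iota 0 n].

Lemma calls_aut_rhs (P : eqType) (D : Type) (d : D) (f : nat -> P) n q i :
  ((q, i) \in calls (aut_rhs d f n)) = (i < n) && (q == f i).
Proof.
rewrite /= -map_comp flatten_map1.
apply/mapP/andP => [[j] | [lt_in /eqP ->]]; last by exists i; rewrite ?mem_iota.
by rewrite mem_iota => /andP [_ lt_jn] [-> ->].
Qed.

Lemma ex_rhs_out_aut_rhs (P : eqType) (S D : Type) (T : tdtt P S D) xs d f n :
  (exists t, rhs_out T xs (aut_rhs d f n) t) <->
  forall i, i < n -> exists x, List.nth_error xs i = Some x /\ accepts T (f i) x.
Proof.
rewrite ex_rhs_outP; split=> [H i lt_in | H q i].
  by apply: H; rewrite calls_aut_rhs lt_in eqxx.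
by rewrite calls_aut_rhs => /andP [/H + /eqP ->].
Qed.

Lemma prhs_aut_rhsE (Q P D O : Type) (A : tdtt P D O) (xs : seq (rhs Q D)) d f n z :
  prhs A xs (aut_rhs d f n) z <->
  exists zs, z = RNode d zs /\ size zs = n /\
    forall i z', List.nth_error zs i = Some z' ->
      exists x, List.nth_error xs i = Some x /\ pderiv A (f i) x z'.
Proof.
rewrite prhs_nodeE; split=> -[zs [-> Hzs]]; exists zs; split=> //.
  by move/Forall2_map_iota: Hzs => [Hsz H]; split=> // i z' /H /prhs_callE.
by apply/Forall2_map_iota; case: Hzs => Hsz H; split=> // i z' /H /prhs_callE.
Qed.

Section DomainAutomaton.
Variables (Q : finType) (D O : Type) (arD : D -> nat) (arO : O -> nat).
Variable T : tdtt Q D O.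
Local Notation A := (dom_aut arD T).

Lemma dom_aut_rule_shape S d r : rule A S d r -> exists f, r = aut_rhs d f (arD d).
Proof. by case=> [[_ ->] | [_ [Gam [_ ->]]]]; eexists. Qed.

Lemma accepts_dom_aut_node S d ts :
  accepts A S (Node d ts) <->
  exists f, rule A S d (aut_rhs d f (arD d)) /\
    forall i, i < arD d -> exists t, List.nth_error ts i = Some t /\ accepts A (f i) t.
Proof.
rewrite accepts_nodeE; split=> [[r [Hr Hts]] | [f [Hr Hts]]].
  have [f Ef] := dom_aut_rule_shape Hr; subst r.
  by exists f; split=> //; move/ex_rhs_out_aut_rhs: Hts.
by exists (aut_rhs d f (arD d)); split=> //; apply/(ex_rhs_out_aut_rhs A).
Qed.

Hypothesis wfT : tt_wf arD arO T.

Lemma accepts_dom_autP t :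
  wft arD t -> forall S, accepts A S t <-> forall q, q \in S -> accepts T q t.
Proof.
elim/tree_nested_ind: t => d ts IH /= /andP [/eqP Hsz Hwf] S.
have IHi i t S' : List.nth_error ts i = Some t ->
    accepts A S' t <-> forall q, q \in S' -> accepts T q t.
  by move=> Ht; have Hin := List.nth_error_In _ _ Ht; exact: IH _ Hin (all_In Hwf Hin) S'.
have accepts_aut_rhs (f : nat -> {set Q}) :
    (forall i t q, List.nth_error ts i = Some t -> q \in f i -> accepts T q t) ->
    exists u, rhs_out A ts (aut_rhs d f (arD d)) u.
  move=> Hf; apply/ex_rhs_out_aut_rhs => i; rewrite -Hsz => /lt_size_nth_error [t Ht].
  by exists t; split=> //; apply/(IHi _ _ _ Ht) => q; apply: Hf Ht.
split.
- case/accepts_nodeE=> r [[[-> _] | [_ [Gam [HGam ->]]]] Hr] q Hq.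
    by rewrite inE in Hq.
  have [+ HG] := HGam q Hq; case EG: (Gam q) => [|g gs] // _.
  have Hg : rule T q d g by apply: HG; rewrite EG; left.
  apply/accepts_nodeE; exists g; split=> //; apply/ex_rhs_outP => q' i Hcall.
  have lt_i := wfr_calls_lt (wfT Hg) Hcall.
  have [t [Ht Hacc]] := (ex_rhs_out_aut_rhs _ _ _ _ _).1 Hr i lt_i.
  exists t; split=> //; apply: ((IHi _ _ _ Ht).1 Hacc).
  by rewrite inE; apply/existsP; exists q; rewrite Hq EG /= Hcall.
- move=> Hacc; apply/accepts_nodeE; case: (eqVneq S set0) => [-> | S_neq0].
    exists (aut_rhs d (fun _ => set0) (arD d)); split; first by left.
    by apply: accepts_aut_rhs => i t q _; rewrite inE.
  have [G HG] : exists G : Q -> rhs Q O, forall j,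
      j \in S -> rule T j d (G j) /\ exists u, rhs_out T ts (G j) u.
    apply: (choice (fun j g => j \in S -> rule T j d g /\ exists u, rhs_out T ts g u)).
    move=> j; case: (boolP (j \in S)) => [/Hacc | _]; last by exists (RCall j 0).
    by case/accepts_nodeE=> g [Hg Hout]; exists g.
  exists (aut_rhs d (dom_succ S (fun j => [:: G j])) (arD d)); split.
    right; split=> //; exists (fun j => [:: G j]); split=> // j Hj.
    by split=> // g [<- | []]; case: (HG j Hj).
  apply: accepts_aut_rhs => i t q Ht; rewrite inE => /existsP [j /andP [Hj]].
  rewrite /= orbF => Hcall; have [_ Hout] := HG j Hj.
  have [t' [Ht' Hq]] := (ex_rhs_outP _ _ _).1 Hout q i Hcall.
  by move: Ht'; rewrite Ht => -[->].
Qed.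

Lemma accepts_dom_aut1 q t : wft arD t -> accepts A [set q] t <-> accepts T q t.
Proof.
move=> wf_t; rewrite accepts_dom_autP //.
by split=> [/(_ q (set11 q)) | Hq q'] //; rewrite inE => /eqP ->.
Qed.

End DomainAutomaton.

Section ProductWithDomainAutomaton.
Variables (Q1 Q2 : finType) (Sig Del Om : Type) (arS : Sig -> nat) (arD : Del -> nat).
Variables (T1 : tdtt Q1 Sig Del) (T2 : tdtt Q2 Del Om).
Hypothesis wf1 : tt_wf arS arD T1.
Local Notation A := (dom_aut arD T2).
Local Notation T1h := (product T1 A).

Section RightHandSides.
Variable ss : seq (tree Sig).
Hypothesis out_product_ss : forall x, List.In x ss -> forall q P t,
  out_st T1h (q, P) x t <-> out_st T1 q x t /\ accepts A P t.

Lemma pderiv_rhs_out k xi : wfr arD k xi -> forall P t,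
  (exists z, pderiv A P xi z /\ rhs_out T1h ss z t) <->
  rhs_out T1 ss xi t /\ accepts A P t.
Proof.
elim/rhs_nested_ind: xi => [q i | d xs IH] /=.
  move=> _ P t; split.
    move=> [_ [/pderiv_callE -> /rhs_out_callE [x [Hx Ht]]]].
    have [Ht1 Hacc] := (out_product_ss (List.nth_error_In _ _ Hx) _ _ _).1 Ht.
    by split=> //; apply/rhs_out_callE; exists x.
  move=> [/rhs_out_callE [x [Hx Ht]] Hacc].
  exists (RCall (q, P) i); split; first exact/pderiv_callE.
  apply/rhs_out_callE; exists x; split=> //.
  exact/(out_product_ss (List.nth_error_In _ _ Hx)).
move=> /andP [/eqP Hsz Hwf] P t.
have aut_rhsP f t' :
    (exists z, prhs A xs (aut_rhs d f (arD d)) z /\ rhs_out T1h ss z t') <->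
    exists ts, t' = Node d ts /\ List.Forall2 (rhs_out T1 ss) xs ts /\
      forall i, i < arD d -> exists y, List.nth_error ts i = Some y /\ accepts A (f i) y.
  have Hfac i x y : List.nth_error xs i = Some x ->
      (exists z, pderiv A (f i) x z /\ rhs_out T1h ss z y) <->
      rhs_out T1 ss x y /\ accepts A (f i) y.
    move=> Hx; have Hin := List.nth_error_In _ _ Hx.
    exact: IH _ Hin (all_In Hwf Hin) (f i) y.
  rewrite -Hsz; split.
    move=> [_ [/prhs_aut_rhsE [zs [-> Hzs]] /rhs_out_nodeE [ts [-> Hts]]]].
    by exists ts; split=> //; apply/(Forall2_comp_pointwise _ Hfac); exists zs.
  move=> [ts [-> Hts]]; have [zs [Hzs Hro]] := (Forall2_comp_pointwise _ Hfac).2 Hts.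
  exists (RNode d zs); split; first by apply/prhs_aut_rhsE; exists zs.
  by apply/rhs_out_nodeE; exists ts.
split.
  move=> [z [/pderiv_nodeE [r [Hr Hpr]] Hro]].
  have [f Ef] := dom_aut_rule_shape Hr; subst r.
  have [ts [-> [Hts Hacc]]] := (aut_rhsP f t).1 (ex_intro _ z (conj Hpr Hro)).
  split; first by apply/rhs_out_nodeE; exists ts.
  by apply/accepts_dom_aut_node; exists f.
move=> [/rhs_out_nodeE [ts [-> Hts]] /accepts_dom_aut_node [f [Hr Hacc]]].
have [z [Hpr Hro]] := (aut_rhsP f _).2 (ex_intro _ ts (conj erefl (conj Hts Hacc))).
by exists z; split=> //; apply/pderiv_nodeE; exists (aut_rhs d f (arD d)).
Qed.

End RightHandSides.

Lemma out_productP s q P t :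
  out_st T1h (q, P) s t <-> out_st T1 q s t /\ accepts A P t.
Proof.
elim/tree_nested_ind: s q P t => a ss IH q P t; rewrite out_st_nodeE; split.
  move=> [z [[xi /= [Hxi Hpd]] Hro]].
  have [Ht Hacc] := (pderiv_rhs_out IH (wf1 Hxi) P t).1 (ex_intro _ z (conj Hpd Hro)).
  by split=> //; apply/out_st_nodeE; exists xi.
move=> [/out_st_nodeE [xi [Hxi Ht]] Hacc].
have [z [Hpd Hro]] := (pderiv_rhs_out IH (wf1 Hxi) P t).2 (conj Ht Hacc).
by exists z; split=> //; exists xi.
Qed.

End ProductWithDomainAutomaton.

Unset Implicit Arguments.

Theorem lemma14 (Q1 Q2 : finType) (Sig Del Om : finType)
  (arS : Sig -> nat) (arD : Del -> nat) (arO : Om -> nat)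
  (T1 : tdtt Q1 Sig Del) (T2 : tdtt Q2 Del Om)
  (wf1 : tt_wf arS arD T1) (wf2 : tt_wf arD arO T2)
  (fin1 : tt_finite T1) (fin2 : tt_finite T2) :
  let A := dom_aut arD T2 in
  let T1h := product T1 A in
  (forall s, wft arS s -> (in_dom T1h s <-> in_dom_comp T1 T2 s)) /\
  (forall s, wft arS s -> forall t, out T1h s t <-> out T1 s t /\ in_dom T2 t).
Proof.
move=> A T1h.
have outP s t : out T1h s t <-> out T1 s t /\ in_dom T2 t.
  rewrite /out (out_productP T2 wf1).
  split=> -[Ht Hdom]; have domP := accepts_dom_aut1 wf2 (init T2) (wft_out_st wf1 Ht).
    by split=> //; apply: domP.1.
  by split=> //; apply: domP.2.
split=> s _; last exact: outP.
split=> [[t /outP [Ht [u Hu]]] | [t [u [Ht Hu]]]]; first by exists t, u.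
by exists t; apply/outP; split=> //; exists u.
Qed.
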